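(* Let $m,k$ be positive integers and $p$ a prime with $(m,k-1)=1$ and $p=\mathrm{ind}_m(k)$; let $G=G(m,p,k)=\langle a,b;\ a^m=1,\ b^p=1,\ b^{-1}ab=a^k\rangle$, $R=\{k^j-1 \bmod m: j\in\mathbb{Z}_p\}$ and $L=\{1-k^j \bmod m: j\in\mathbb{Z}_p\}$. Then every nonzero element of $R^*$ and every nonzero element of $L^*$ is invertible in $\mathbb{Z}_m$, and both $\mathrm{P}(G)$ and $\Lambda(G)$ are complete (i.e. $\Sigma_G(R)$ and $\Sigma_G(L)$ are complete).
   Context: $\mathrm{ind}_m(k)$ is the least positive integer $d$ with $k^d\equiv 1\pmod m$. $S^*$ denotes the multiplicative subsemigroup of $\mathbb{Z}_m$ generated by $S$. Elements of $G$ are written uniquely as $a^ib^j$; $k_t=k^t-1\pmod m$. Commutators are $[x,y]=x^{-1}y^{-1}xy$; $(x)\rho(g)=[x,g]$, $(x)\lambda(g)=[g,x]$; maps are written on the right and composed left to right. $\mathrm{P}(G)$, $\Lambda(G)$ are the semigroups generated by all $\rho(g)$, resp. all $\lambda(g)$; they equal $\Sigma_G(R)$, $\Sigma_G(L)$. For $x,y\in\mathbb{Z}_m$, $(a^ib^j)\mu(x,y)=a^{xik^j-yk_j}$, $C(x,y)=\{\mu(x,yz):z\in\mathbb{Z}_m\}$. For $S\subseteq\mathbb{Z}_m$, $I(S)$ is the set of invertible elements of $S$; a base is $S$ with $0\in S$, $I(S)\neq\varnothing$; $\Sigma_G(S)$ is the semigroup generated by $\{\mu(s,z):s\in S,z\in\mathbb{Z}_m\}$.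 For $x\in S^*$, $Y(x)=\{s^*z: s^*\in S^*, z\in\mathbb{Z}_m, \exists s\in S,\ x\equiv ss^*\}$; the $x$-family $\{C(x,y):y\in Y(x)\}$ is complete if it contains $C(x,1)$, and $\Sigma_G(S)$ is complete if all $x$-families ($x\in S^*$) are complete. *)

From mathcomp Require Import all_boot all_order all_algebra.
Set Implicit Arguments. Unset Strict Implicit. Unset Printing Implicit Defensive.
Import GRing.Theory.
Local Open Scope ring_scope.

Definition is_ind (m k d : nat) : Prop :=
  [/\ (0 < d)%N, (k ^ d = 1 %[mod m])%N &
      forall d' : nat, (0 < d')%N -> (k ^ d' = 1 %[mod m])%N -> (d <= d')%N].

(* Elements a^i b^j of G(m,p,k), written uniquely as pairs (i, j). *)
Definition Gmp (m p : nat) : finType := ('Z_m * 'Z_p)%type.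

Definition kZ (m k : nat) : 'Z_m := k%:R.

Definition kt (m k t : nat) : 'Z_m := kZ m k ^+ t - 1.

Definition mu (m p k : nat) (x y : 'Z_m) : {ffun Gmp m p -> Gmp m p} :=
  [ffun g : Gmp m p => (x * g.1 * kZ m k ^+ g.2 - y * kt m k g.2, 0 : 'Z_p)].

Definition Cset (m p k : nat) (x y : 'Z_m) : {set {ffun Gmp m p -> Gmp m p}} :=
  [set mu p k x (y * z) | z : 'Z_m].

Inductive sgen (m : nat) (S : {set 'Z_m}) : 'Z_m -> Prop :=
| sgen_base s : s \in S -> sgen S s
| sgen_mul a b : sgen S a -> sgen S b -> sgen S (a * b).

Definition Yset (m : nat) (S : {set 'Z_m}) (x y : 'Z_m) : Prop :=
  exists (ss z : 'Z_m), [/\ sgen S ss, y = ss * z & (exists2 s, s \in S & x = s * ss)].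

Definition family_complete (m p k : nat) (S : {set 'Z_m}) (x : 'Z_m) : Prop :=
  exists2 y, Yset S x y & Cset p k x y = Cset p k x 1.

Definition Sigma_complete (m p k : nat) (S : {set 'Z_m}) : Prop :=
  forall x, sgen S x -> family_complete p k S x.

Definition Rset (m p k : nat) : {set 'Z_m} := [set kZ m k ^+ j - 1 | j : 'Z_p].
Definition Lset (m p k : nat) : {set 'Z_m} := [set 1 - kZ m k ^+ j | j : 'Z_p].

From mathcomp Require Import all_boot all_order all_algebra all_fingroup.

Set Implicit Arguments.
Unset Strict Implicit.
Unset Printing Implicit Defensive.

Import GRing.Theory.
Local Open Scope ring_scope.

(* Every element k^j - 1 of R (and 1 - k^j of L) is 0 or a unit of Z_m: a
   common divisor d of m and k^j - 1, with 0 < j < p, also sees k^p = 1, and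
   since j and p are coprime this forces k = 1 mod d, so d divides
   gcd(m, k - 1) = 1.  Products of zeros and units are again zeros or units.
   Completeness is then cheap: C(x, y) depends on y only up to a unit factor,
   and Y(x) always contains a unit, namely u when x = 0 (as x = 0 * u) and
   u^-1 x otherwise (as x = u * (u^-1 x)), where u = +-(k - 1) is the unit
   of S given by j = 1; u^-1 lies in S^* because it is a power of u. *)

Lemma expn_coprime_eq1_mod (d k i j : nat) :
  (0 < i)%N -> coprime i j ->
  (k ^ i = 1 %[mod d])%N -> (k ^ j = 1 %[mod d])%N -> (k = 1 %[mod d])%N.
Proof.
move=> i_gt0 co_ij ki1 kj1.
have [a _] := Bezoutl j i_gt0; rewrite (eqP co_ij) => /dvdnP[c Ec].
have kja1 : ((k ^ j) ^ a * k = k %[mod d])%N.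
  by rewrite -modnMml -modnXm kj1 modnXm exp1n modnMml mul1n.
rewrite -kja1 -expnM -expnSr mulnC -addn1 addnC Ec mulnC expnM.
by rewrite -modnXm ki1 modnXm exp1n.
Qed.

Lemma coprime_expn_sub1 (m k p j : nat) :
  (0 < k)%N -> (0 < p)%N -> coprime m (k - 1) -> (k ^ p = 1 %[mod m])%N ->
  coprime p j -> coprime m (k ^ j - 1).
Proof.
move=> k_gt0 p_gt0 co_mk kp1 co_pj.
set d := gcdn m (k ^ j - 1).
have dvd_dm : (d %| m)%N := dvdn_gcdl _ _.
have kj1 : (k ^ j = 1 %[mod d])%N.
  by apply/eqP; rewrite eqn_mod_dvd ?expn_gt0 ?k_gt0 ?dvdn_gcdr.
have kp1d : (k ^ p = 1 %[mod d])%N by rewrite -(modn_dvdm _ dvd_dm) kp1 modn_dvdm.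
have k1 := expn_coprime_eq1_mod p_gt0 co_pj kp1d kj1.
have dvd_dk : (d %| k - 1)%N by rewrite -eqn_mod_dvd // k1.
have : (d %| gcdn m (k - 1))%N by rewrite dvdn_gcd dvd_dm.
by rewrite (eqP co_mk) dvdn1.
Qed.

Lemma kZ_expB1_unit (m k p j : nat) :
  (1 < m)%N -> (0 < k)%N -> (0 < p)%N -> coprime m (k - 1) ->
  (k ^ p = 1 %[mod m])%N -> coprime p j -> kZ m k ^+ j - 1 \is a GRing.unit.
Proof.
move=> m_gt1 k_gt0 p_gt0 co_mk kp1 co_pj.
have -> : kZ m k ^+ j - 1 = (k ^ j - 1)%:R.
  by rewrite natrB ?expn_gt0 ?k_gt0 // natrX.
rewrite unitZpE //.
exact: (coprime_expn_sub1 k_gt0 p_gt0).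
Qed.

Lemma unit_expS_eq1 (R : finUnitRingType) (u : R) :
  u \is a GRing.unit -> exists n, u ^+ n.+1 = 1.
Proof.
move=> uU; pose U := FinRing.unit R uU.
exists #[U]%g.-1; rewrite prednK ?order_gt0 //.
by have := congr1 val (expg_order U); rewrite FinRing.val_unitX.
Qed.

Lemma Cset_unit (m p k : nat) (x y : 'Z_m) :
  y \is a GRing.unit -> Cset p k x y = Cset p k x 1.
Proof.
move=> yU; apply/setP=> f; apply/imsetP/imsetP=> [[z _ ->]|[z _ ->]].
  by exists (y * z); rewrite ?mul1r.
by exists (y^-1 * z); rewrite ?mul1r ?(mulVKr yU).
Qed.

Section Semigroup.

Variables (m : nat) (S : {set 'Z_m}).

Lemma sgen_exprM (a b : 'Z_m) (n : nat) : sgen S a -> sgen S b -> sgen S (b ^+ n * a).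
Proof.
move=> Sa Sb; elim: n => [|n IHn]; first by rewrite mul1r.
by rewrite exprS -mulrA; apply: sgen_mul.
Qed.

Lemma sgen_invrM (u x : 'Z_m) :
  u \in S -> u \is a GRing.unit -> sgen S x -> sgen S (u^-1 * x).
Proof.
move=> Su uU Sx; have [n un1] := unit_expS_eq1 uU.
suff -> : u^-1 = u ^+ n by apply: sgen_exprM => //; apply: sgen_base.
by apply: (mulrI uU); rewrite -exprS un1 divrr.
Qed.

Hypothesis S_zero_or_unit : {in S, forall s, (s == 0) || (s \is a GRing.unit)}.

Lemma sgen_unit (x : 'Z_m) : sgen S x -> x != 0 -> x \is a GRing.unit.
Proof.
move=> Sx; apply: contraNT; elim: Sx => [s /S_zero_or_unit /orP[] // -> //|].
move=> a b _ IHa _ IHb; rewrite unitrM negb_and.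
by case/orP=> [/IHa|/IHb] /eqP->; rewrite ?mul0r ?mulr0.
Qed.

Variable u : 'Z_m.
Hypotheses (S0 : 0 \in S) (Su : u \in S) (uU : u \is a GRing.unit).

Lemma Yset_unit (x : 'Z_m) : sgen S x -> exists2 y, Yset S x y & y \is a GRing.unit.
Proof.
move=> Sx; have [-> | x_neq0] := eqVneq x 0.
  exists u => //; exists u, 1; split; first exact: sgen_base.
    by rewrite mulr1.
  by exists 0; rewrite ?mul0r.
have xU := sgen_unit Sx x_neq0.
exists (u^-1 * x); last by rewrite unitrM unitrV uU.
exists (u^-1 * x), 1; split; first exact: sgen_invrM.
  by rewrite mulr1.
by exists u; rewrite ?(mulVKr uU).
Qed.

Lemma Sigma_complete_of_unit (p k : nat) : Sigma_complete p k S.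
Proof.
move=> x Sx; have [y Yy yU] := Yset_unit Sx.
by exists y => //; apply: Cset_unit.
Qed.

End Semigroup.

Lemma is_ind_gt1 (m k d : nat) : (0 < m)%N -> is_ind m k d -> (1 < d)%N -> (1 < m)%N.
Proof.
move=> m_gt0 [_ _ d_min] d_gt1; rewrite ltn_neqAle m_gt0 andbT.
apply: contraTneq d_gt1 => m1; rewrite -leqNgt; apply: d_min => //.
by rewrite -m1 !modn1.
Qed.

Section RsetLset.

Variables m k p : nat.
Hypotheses (m_gt1 : (1 < m)%N) (k_gt0 : (0 < k)%N) (p_prime : prime p).
Hypotheses (co_mk : coprime m (k - 1)) (kp1 : (k ^ p = 1 %[mod m])%N).

Let p_gt1 : (1 < p)%N := prime_gt1 p_prime.

Lemma mem_Rset (j : nat) : (j < p)%N -> kZ m k ^+ j - 1 \in Rset m p k.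
Proof. by move=> j_lt_p; apply/imsetP; exists (inord j); rewrite ?inordK ?Zp_cast. Qed.

Lemma mem_Lset (j : nat) : (j < p)%N -> 1 - kZ m k ^+ j \in Lset m p k.
Proof. by move=> j_lt_p; apply/imsetP; exists (inord j); rewrite ?inordK ?Zp_cast. Qed.

Lemma kZ_expB1_zero_or_unit (j : 'Z_p) :
  (kZ m k ^+ j - 1 == 0) || (kZ m k ^+ j - 1 \is a GRing.unit).
Proof.
have [-> | j_gt0] := posnP j; first by rewrite subrr eqxx.
have j_lt_p : (j < p)%N by apply: leq_trans (ltn_ord j) _; rewrite Zp_cast.
apply/orP; right; apply: kZ_expB1_unit m_gt1 k_gt0 (prime_gt0 p_prime) co_mk kp1 _.
by rewrite prime_coprime // gtnNdvd.
Qed.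

Lemma Rset_zero_or_unit : {in Rset m p k, forall s, (s == 0) || (s \is a GRing.unit)}.
Proof. by move=> _ /imsetP[j _ ->]; apply: kZ_expB1_zero_or_unit. Qed.

Lemma Lset_zero_or_unit : {in Lset m p k, forall s, (s == 0) || (s \is a GRing.unit)}.
Proof.
by move=> _ /imsetP[j _ ->]; rewrite -opprB oppr_eq0 unitrN kZ_expB1_zero_or_unit.
Qed.

Let kZ_sub1_unit : kZ m k ^+ 1 - 1 \is a GRing.unit :=
  kZ_expB1_unit m_gt1 k_gt0 (prime_gt0 p_prime) co_mk kp1 (coprimen1 p).

Lemma Rset_complete : Sigma_complete p k (Rset m p k).
Proof.
apply: (Sigma_complete_of_unit Rset_zero_or_unit _ (mem_Rset p_gt1) kZ_sub1_unit).
by have := mem_Rset (prime_gt0 p_prime); rewrite expr0 subrr.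
Qed.

Lemma Lset_complete : Sigma_complete p k (Lset m p k).
Proof.
apply: (Sigma_complete_of_unit Lset_zero_or_unit _ (mem_Lset p_gt1)).
  by have := mem_Lset (prime_gt0 p_prime); rewrite expr0 subrr.
by rewrite -opprB unitrN kZ_sub1_unit.
Qed.

End RsetLset.

Theorem theorem6p5 (m k p : nat) :
  (0 < m)%N -> (0 < k)%N -> prime p -> coprime m (k - 1) -> is_ind m k p ->
  [/\ (forall x : 'Z_m, sgen (Rset m p k) x -> x != 0 -> x \is a GRing.unit),
      (forall x : 'Z_m, sgen (Lset m p k) x -> x != 0 -> x \is a GRing.unit),
      Sigma_complete p k (Rset m p k) &
      Sigma_complete p k (Lset m p k)].
Proof.
move=> m_gt0 k_gt0 p_prime co_mk p_ind.
have m_gt1 := is_ind_gt1 m_gt0 p_ind (prime_gt1 p_prime).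
have [_ kp1 _] := p_ind.
split.
- exact: sgen_unit (Rset_zero_or_unit m_gt1 k_gt0 p_prime co_mk kp1).
- exact: sgen_unit (Lset_zero_or_unit m_gt1 k_gt0 p_prime co_mk kp1).
- exact: Rset_complete.
- exact: Lset_complete.
Qed.
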